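(* Let $(\mathcal{X},c)$ be a metric space with diameter at most $1$ and let $\mu,\nu$ be discrete probability distributions on $\mathcal{X}$ with finite supports. Then $\mathrm{RPW}_{\infty,1}(\mu,\nu)=\mathrm{LP}(\mu,\nu)$.
   Context: $c(x,y)\le1$ for all $x,y$. For $\alpha\in[0,1]$, a partial transport plan of mass $\alpha$ between $\mu,\nu$ is a nonnegative measure $\gamma$ on $\mathcal{X}\times\mathcal{X}$ of total mass $\alpha$ with first marginal $\le\mu$ and second marginal $\le\nu$ (setwise). Its $\infty$-cost $w_\infty(\gamma)$ is the maximum of $c$ over the support of $\gamma$, and $W_{\infty,\alpha}(\mu,\nu)=\inf w_\infty(\gamma)$ over such $\gamma$. $\mathrm{RPW}_{\infty,k}(\mu,\nu)=\inf\{\varepsilon\in[0,1]: W_{\infty,1-\varepsilon}(\mu,\nu)\le k\varepsilon\}$. The Lévy–Prokhorov distance is $\mathrm{LP}(\mu,\nu)=\inf\{\varepsilon>0: \mu(A)\le\nu(A^\varepsilon)+\varepsilon \text{ and } \nu(A)\le\mu(A^\varepsilon)+\varepsilon \text{ for all Borel } A\}$, where $A^\varepsilon=\{x: \inf_{a\in A}c(x,a)<\varepsilon\}$. *)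

From mathcomp Require Import all_boot all_order all_algebra.
From mathcomp Require Import all_classical all_reals.
Set Implicit Arguments. Unset Strict Implicit. Unset Printing Implicit Defensive.
Import Order.TTheory GRing.Theory Num.Theory.
Local Open Scope classical_set_scope.
Local Open Scope ring_scope.

Definition is_metric {R : realType} {T : Type} (c : T -> T -> R) : Prop :=
  [/\ forall x y, 0 <= c x y,
      forall x y, c x y = 0 <-> x = y,
      forall x y, c x y = c y x &
      forall x y z, c x z <= c x y + c y z].

(* A discrete (finitely supported) nonnegative measure on T is given by its
   mass function m : T -> R; the measure of a set A is the (finite) sum
   \sum_(x \in A) m x. *)
Definition fin_supp {R : realType} {T : Type} (m : T -> R) : Prop :=
  finite_set [set x | m x != 0].

Definition msr {R : realType} {T : choiceType} (m : T -> R) (A : set T) : R :=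
  \sum_(x \in A) m x.

Definition is_discrete_prob {R : realType} {T : choiceType} (m : T -> R) : Prop :=
  [/\ forall x, 0 <= m x, fin_supp m & msr m setT = 1].

Definition partial_plan {R : realType} {T : choiceType} (mu nu : T -> R)
    (alpha : R) (g : T * T -> R) : Prop :=
  [/\ forall p, 0 <= g p, fin_supp g, msr g setT = alpha,
      (forall A : set T, msr g (A `*` setT) <= msr mu A) &
      (forall A : set T, msr g (setT `*` A) <= msr nu A)].

(* infinity-cost: max of c over the support of g (0 for the zero measure). *)
Definition w_infty {R : realType} {T : choiceType} (c : T -> T -> R)
    (g : T * T -> R) : R :=
  sup [set c p.1 p.2 | p in [set p | g p != 0]].

Definition W_infty {R : realType} {T : choiceType} (c : T -> T -> R)
    (alpha : R) (mu nu : T -> R) : R :=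
  inf [set w_infty c g | g in partial_plan mu nu alpha].

Definition RPW_infty {R : realType} {T : choiceType} (c : T -> T -> R)
    (k : R) (mu nu : T -> R) : R :=
  inf [set eps | 0 <= eps <= 1 /\ W_infty c (1 - eps) mu nu <= k * eps].

Definition nbhd_eps {R : realType} {T : Type} (c : T -> T -> R) (A : set T)
    (eps : R) : set T :=
  [set x | exists2 a, A a & c x a < eps].

Definition LP {R : realType} {T : choiceType} (c : T -> T -> R)
    (mu nu : T -> R) : R :=
  inf [set eps | 0 < eps /\ forall A : set T,
        msr mu A <= msr nu (nbhd_eps c A eps) + eps /\
        msr nu A <= msr mu (nbhd_eps c A eps) + eps].

(* Let S be the (finite) union of the supports of mu and nu.  If
   mu(A) <= nu(A^e) + e for every A, this is, on S, the Hall condition with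
   deficiency e for the bipartite graph {(x, y) | c x y < e} weighted by mu and
   nu.  A fractional Hall theorem -- push mass along an edge until one of its
   ends is exhausted or some set A becomes tight, then split the problem into
   (A, N(A)) and its complement -- gives a sub-coupling of mass at least 1 - e
   carried by that graph; rescaled to mass exactly 1 - e it shows
   W_{oo,1-e} <= e, hence RPW <= LP.  Conversely, a partial plan g of mass
   1 - e that moves mass by less than e' gives
   mu(A) <= g(A x X) + e <= nu(A^e') + e, and symmetrically for nu, so every e
   admissible for RPW makes every e' > e admissible for LP. *)

From mathcomp Require Import all_boot all_order all_algebra.
From mathcomp Require Import all_classical all_reals.
From mathcomp Require Import finmap lra.
Set Implicit Arguments. Unset Strict Implicit. Unset Printing Implicit Defensive.
Import Order.TTheory GRing.Theory Num.Theory.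
Local Open Scope ring_scope.

Section FinitelySupported.
Variables (R : realDomainType) (I : finType).
Implicit Types (f g : I -> R) (A B : {set I}).

Definition supp f : {set I} := [set i | f i != 0].

Definition restr A f i := if i \in A then f i else 0.

Definition pmass (i0 : I) (s : R) i := if i == i0 then s else 0.

Lemma pmass_id i0 s : pmass i0 s i0 = s.
Proof. by rewrite /pmass eqxx. Qed.

Lemma pmass_neq i0 s i : i != i0 -> pmass i0 s i = 0.
Proof. by rewrite /pmass => /negbTE ->. Qed.

Lemma sum_pmass (A : {pred I}) i0 s :
  \sum_(i in A) pmass i0 s i = if i0 \in A then s else 0.
Proof.
case: ifPn => [Ai0|Ni0].
  by rewrite (bigD1 i0) //= pmass_id big1 ?addr0 // => i /andP[_ /pmass_neq].
by rewrite big1 // => i Ai; apply: pmass_neq; apply: contraNneq Ni0 => <-.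
Qed.

Lemma sum_restr B A f : \sum_(i in B) restr A f i = \sum_(i in B :&: A) f i.
Proof.
rewrite big_mkcond [RHS]big_mkcond; apply: eq_bigr => i _.
by rewrite finset.in_setI /restr; case: (i \in B); case: (i \in A).
Qed.

Lemma ler_sum_subset A B f : A \subset B -> (forall i, 0 <= f i) ->
  \sum_(i in A) f i <= \sum_(i in B) f i.
Proof.
move=> AB f_ge0; rewrite [leRHS](big_setID A) /= (finset.setIidPr AB) lerDl.
exact: sumr_ge0.
Qed.

Lemma sum_setUD A B f :
  \sum_(i in A :|: B) f i = \sum_(i in B) f i + \sum_(i in A :\: B) f i.
Proof.
rewrite (big_setID B) /= (finset.setIidPr (finset.subsetUr _ _)).
by rewrite finset.setDUl finset.setDv finset.setU0.
Qed.

Lemma restr_ge0 A f : (forall i, 0 <= f i) -> forall i, 0 <= restr A f i.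
Proof. by move=> f_ge0 i; rewrite /restr; case: ifP. Qed.

Lemma restr_add_setC A f i : restr A f i + restr (~: A) f i = f i.
Proof. by rewrite /restr inE; case: (i \in A); rewrite ?addr0 ?add0r. Qed.

Lemma supp_restr A f : supp (restr A f) \subset supp f.
Proof.
by apply/fintype.subsetP => i; rewrite !inE /restr; case: ifP; rewrite ?eqxx.
Qed.

Lemma supp_neq f g i : f i != 0 -> g i = 0 -> supp g != supp f.
Proof.
by move=> fi gi; apply/eqP => /setP/(_ i); rewrite !inE gi fi eqxx.
Qed.

Lemma push_ge0 f i0 s : (forall i, 0 <= f i) -> s <= f i0 ->
  forall i, 0 <= (f \- pmass i0 s) i.
Proof.
move=> f_ge0 s_le i /=; have [-> | i_neq] := eqVneq i i0.
  by rewrite pmass_id subr_ge0.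
by rewrite pmass_neq // subr0.
Qed.

Lemma supp_push f i0 s : f i0 != 0 -> supp (f \- pmass i0 s) \subset supp f.
Proof.
move=> fi0; apply/fintype.subsetP => i; rewrite !inE /=; apply: contraNneq => fi.
by rewrite pmass_neq ?fi ?subr0 //; apply: contraNneq fi0 => <-; rewrite fi.
Qed.

End FinitelySupported.

Lemma card_supp2_lt (R : realDomainType) (I J : finType) (f f' : I -> R)
    (g g' : J -> R) :
  supp f' \subset supp f -> supp g' \subset supp g ->
  (supp f' != supp f) || (supp g' != supp g) ->
  (#|supp f'| + #|supp g'| < #|supp f| + #|supp g|)%N.
Proof.
move=> sf sg /orP[nf | ng].
  by rewrite -addSn leq_add ?subset_leq_card // proper_card // finset.properEneq nf.
by rewrite -addnS leq_add ?subset_leq_card // proper_card // finset.properEneq ng.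
Qed.

Section FractionalHall.
Variables (R : realDomainType) (X Y : finType) (E : X -> Y -> bool).
Implicit Types (mu : X -> R) (nu : Y -> R) (A B : {set X}).

Definition nbhd A : {set Y} := [set y | [exists x in A, E x y]].

Definition slack mu nu A := \sum_(y in nbhd A) nu y - \sum_(x in A) mu x.

Definition hall_cond mu nu := forall A, 0 <= slack mu nu A.

Definition saturating_flow mu nu (g : X -> Y -> R) :=
  [/\ forall x y, 0 <= g x y, forall x y, ~~ E x y -> g x y = 0,
      forall x, \sum_y g x y = mu x & forall y, \sum_x g x y <= nu y].

Definition feasible mu nu := exists g, saturating_flow mu nu g.

Lemma nbhdP A x y : x \in A -> E x y -> y \in nbhd A.
Proof. by move=> Ax Exy; rewrite inE; apply/existsP; exists x; rewrite Ax. Qed.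

Lemma nbhd0 : nbhd finset.set0 = finset.set0.
Proof. by apply/setP => y; rewrite !inE; apply/existsP => -[x]; rewrite inE. Qed.

Lemma nbhdS A B : A \subset B -> nbhd A \subset nbhd B.
Proof.
move=> /fintype.subsetP AB; apply/fintype.subsetP => y /[!inE] /existsP[x /andP[Ax Exy]].
by apply/existsP; exists x; rewrite AB.
Qed.

Lemma feasible0 mu nu : (forall x, mu x = 0) -> (forall y, 0 <= nu y) ->
  feasible mu nu.
Proof.
move=> mu0 nu_ge0; exists (fun _ _ => 0); split=> //.
- by move=> x; rewrite big1 // mu0.
- by move=> y; rewrite big1.
Qed.

Lemma feasible_pmass x0 y0 s : E x0 y0 -> 0 <= s ->
  feasible (pmass x0 s) (pmass y0 s).
Proof.
move=> Exy s_ge0; exists (fun x y => pmass x0 (pmass y0 s y) x); split.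
- by move=> x y; rewrite /pmass; case: ifP => //; case: ifP.
- move=> x y NExy; have [x_eq | x_neq] := eqVneq x x0; last by rewrite pmass_neq.
  by rewrite x_eq pmass_id pmass_neq //; apply: contraNneq _ NExy => ->; rewrite x_eq.
- move=> x; have [x_eq | x_neq] := eqVneq x x0; last first.
    by rewrite pmass_neq // big1 // => y _; rewrite pmass_neq.
  rewrite x_eq (bigD1 y0) //= !pmass_id big1 ?addr0 // => y y_neq.
  by rewrite (pmass_neq _ y_neq) pmass_id.
- by move=> y; rewrite sum_pmass.
Qed.

Lemma feasible_add mu1 nu1 mu2 nu2 :
  feasible mu1 nu1 -> feasible mu2 nu2 -> feasible (mu1 \+ mu2) (nu1 \+ nu2).
Proof.
move=> [g1 [g1_ge0 g1E g1r g1c]] [g2 [g2_ge0 g2E g2r g2c]].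
exists (fun x y => g1 x y + g2 x y); split.
- by move=> x y; rewrite addr_ge0.
- by move=> x y NExy; rewrite g1E // g2E // addr0.
- by move=> x; rewrite big_split /= g1r g2r.
- by move=> y; rewrite big_split /= lerD.
Qed.

Lemma feasible_ext mu nu mu' nu' : feasible mu nu ->
  mu =1 mu' -> (forall y, nu y <= nu' y) -> feasible mu' nu'.
Proof.
move=> [g [g_ge0 gE gr gc]] mumu' nunu'; exists g; split => // [x|y].
  by rewrite gr mumu'.
exact: le_trans (gc y) (nunu' y).
Qed.

Lemma feasible_split A (C : {set Y}) mu nu :
  feasible (restr A mu) (restr C nu) -> feasible (restr (~: A) mu) (restr (~: C) nu) ->
  feasible mu nu.
Proof.
move=> f1 f2; apply: feasible_ext (feasible_add f1 f2) _ _ => [x|y] /=.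
  exact: restr_add_setC.
by rewrite restr_add_setC.
Qed.

Lemma hall_neighbour mu nu x0 : (forall y, 0 <= nu y) -> hall_cond mu nu ->
  0 < mu x0 -> exists2 y0, E x0 y0 & 0 < nu y0.
Proof.
move=> nu_ge0 H mu_x0.
case: (pickP [pred y | E x0 y && (0 < nu y)]) => [y /andP[]|none]; first by exists y.
have := H [set x0]; rewrite /slack big_set1 subr_ge0 big1 ?leNgt ?mu_x0 // => y.
rewrite inE => /existsP[x /andP[/[!inE] /eqP -> Ex0y]].
by apply/eqP; rewrite eq_le nu_ge0 andbT leNgt; move: (none y); rewrite /= Ex0y => /negbT.
Qed.

Lemma hall_push mu nu x0 y0 s : hall_cond mu nu -> E x0 y0 ->
  (forall A, x0 \notin A -> y0 \in nbhd A -> s <= slack mu nu A) ->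
  hall_cond (mu \- pmass x0 s) (nu \- pmass y0 s).
Proof.
move=> H Exy s_le A; have := H A; rewrite /slack !sumrB !sum_pmass.
have [Ax0 | NAx0] := boolP (x0 \in A); first by rewrite (nbhdP Ax0 Exy); lra.
have [Ay0 | _] := boolP (y0 \in nbhd A); last by lra.
by have := s_le A NAx0 Ay0; rewrite /slack; lra.
Qed.

Lemma hall_restr mu nu A : (forall y, 0 <= nu y) -> hall_cond mu nu ->
  hall_cond (restr A mu) (restr (nbhd A) nu).
Proof.
move=> nu_ge0 H B; rewrite /slack !sum_restr subr_ge0.
apply: le_trans (_ : _ <= \sum_(y in nbhd (B :&: A)) nu y) _.
  by rewrite -subr_ge0; apply: H.
by apply: ler_sum_subset; rewrite // finset.subsetI !nbhdS ?finset.subsetIl ?finset.subsetIr.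
Qed.

Lemma nbhdU A B : nbhd (A :|: B) = nbhd A :|: nbhd B.
Proof.
apply/setP => y; rewrite !inE; apply/existsP/orP => [[x]|[]/existsP[x]].
- rewrite inE => /andP[/orP[Ax|Bx] Exy]; [left|right].
    by apply/existsP; exists x; rewrite Ax.
  by apply/existsP; exists x; rewrite Bx.
- by move=> /andP[Ax Exy]; exists x; rewrite inE Ax.
- by move=> /andP[Bx Exy]; exists x; rewrite inE Bx orbT.
Qed.


Lemma hall_restrC mu nu A : (forall y, 0 <= nu y) -> hall_cond mu nu ->
  slack mu nu A <= 0 -> hall_cond (restr (~: A) mu) (restr (~: nbhd A) nu).
Proof.
move=> nu_ge0 H A_tight B; have := H (B :|: A).
rewrite /slack !sum_restr -!finset.setDE nbhdU !sum_setUD.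
move: A_tight; rewrite /slack; lra.
Qed.

Lemma feasible_push mu nu x0 y0 s : E x0 y0 -> 0 <= s ->
  feasible (mu \- pmass x0 s) (nu \- pmass y0 s) -> feasible mu nu.
Proof.
move=> Exy s_ge0 f; apply: feasible_ext (feasible_add f (feasible_pmass Exy s_ge0)) _ _.
  by move=> x /=; rewrite subrK.
by move=> y /=; rewrite subrK.
Qed.

Section HallStep.
Variables (mu : X -> R) (nu : Y -> R).
Hypotheses (mu_ge0 : forall x, 0 <= mu x) (nu_ge0 : forall y, 0 <= nu y).
Hypothesis hall_mu_nu : hall_cond mu nu.
Hypothesis IH : forall mu' nu', (forall x, 0 <= mu' x) -> (forall y, 0 <= nu' y) ->
  hall_cond mu' nu' -> supp mu' \subset supp mu -> supp nu' \subset supp nu ->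
  (supp mu' != supp mu) || (supp nu' != supp nu) -> feasible mu' nu'.

Section Edge.
Variables (x0 : X) (y0 : Y).
Hypotheses (Ex0y0 : E x0 y0) (mu_x0 : 0 < mu x0) (nu_y0 : 0 < nu y0).

Lemma hall_step_exhaust s : s <= mu x0 -> s <= nu y0 -> s = mu x0 \/ s = nu y0 ->
  (forall A, x0 \notin A -> y0 \in nbhd A -> s <= slack mu nu A) -> feasible mu nu.
Proof.
move=> s_mu s_nu s_eq s_slack.
have s_ge0 : 0 <= s by case: s_eq => ->; apply: ltW.
apply: (feasible_push Ex0y0 s_ge0); apply: IH.
- exact: push_ge0.
- exact: push_ge0.
- exact: hall_push.
- exact/supp_push/lt0r_neq0.
- exact/supp_push/lt0r_neq0.
case: s_eq => ->; apply/orP; [left | right].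
  by apply: (supp_neq (lt0r_neq0 mu_x0)); rewrite /= pmass_id subrr.
by apply: (supp_neq (lt0r_neq0 nu_y0)); rewrite /= pmass_id subrr.
Qed.

Lemma hall_step_tight A : x0 \notin A -> y0 \in nbhd A ->
  slack mu nu A < mu x0 -> slack mu nu A < nu y0 ->
  (forall B, x0 \notin B -> y0 \in nbhd B -> slack mu nu A <= slack mu nu B) ->
  feasible mu nu.
Proof.
move=> NAx0 Ay0 s_mu s_nu A_min; set s := slack mu nu A in s_mu s_nu A_min.
have s_ge0 : 0 <= s := hall_mu_nu A.
set mu' := mu \- pmass x0 s; set nu' := nu \- pmass y0 s.
have mu'_ge0 : forall x, 0 <= mu' x := push_ge0 mu_ge0 (ltW s_mu).
have nu'_ge0 : forall y, 0 <= nu' y := push_ge0 nu_ge0 (ltW s_nu).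
have H' : hall_cond mu' nu' := hall_push hall_mu_nu Ex0y0 A_min.
have A_tight : slack mu' nu' A <= 0.
  by rewrite /slack !sumrB !sum_pmass (negbTE NAx0) Ay0 /s /slack; lra.
have sub_mu : supp mu' \subset supp mu := supp_push _ (lt0r_neq0 mu_x0).
have sub_nu : supp nu' \subset supp nu := supp_push _ (lt0r_neq0 nu_y0).
apply: (feasible_push Ex0y0 s_ge0); apply: (@feasible_split A (nbhd A)); apply: IH.
- exact: restr_ge0.
- exact: restr_ge0.
- exact: hall_restr.
- exact: fintype.subset_trans (supp_restr _ _) sub_mu.
- exact: fintype.subset_trans (supp_restr _ _) sub_nu.
- by rewrite (supp_neq (lt0r_neq0 mu_x0)) // /restr (negbTE NAx0).
- exact: restr_ge0.
- exact: restr_ge0.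
- exact: hall_restrC.
- exact: fintype.subset_trans (supp_restr _ _) sub_mu.
- exact: fintype.subset_trans (supp_restr _ _) sub_nu.
- by rewrite orbC (supp_neq (lt0r_neq0 nu_y0)) // /restr inE Ay0.
Qed.

End Edge.

Lemma hall_step : feasible mu nu.
Proof.
have [x0 /= mu_x0 | mu0] := pickP [pred x | 0 < mu x]; last first.
  by apply: feasible0 => // x; apply/eqP; rewrite eq_le mu_ge0 andbT leNgt; exact/negbT/mu0.
have [y0 Ex0y0 nu_y0] := hall_neighbour nu_ge0 hall_mu_nu mu_x0.
pose s0 := Num.min (mu x0) (nu y0).
pose P A := (x0 \notin A) && (y0 \in nbhd A).
have [A1 /andP[PA1 A1_lt] | no_A] := pickP [pred A | P A && (slack mu nu A < s0)].
  have [A /andP[NAx0 Ay0] A_min] := arg_minP (slack mu nu) PA1.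
  have A_lt : slack mu nu A < s0 := le_lt_trans (A_min _ PA1) A1_lt.
  apply: (hall_step_tight Ex0y0 mu_x0 nu_y0 NAx0 Ay0).
  - by move: A_lt; rewrite lt_min => /andP[].
  - by move: A_lt; rewrite lt_min => /andP[].
  - by move=> B NBx0 By0; apply: A_min; rewrite /P NBx0.
apply: (@hall_step_exhaust x0 y0 Ex0y0 mu_x0 nu_y0 s0).
- by rewrite ge_min lexx.
- by rewrite ge_min lexx orbT.
- by rewrite /s0 minEle; case: ifP; [left | right].
- by move=> B NBx0 By0; move: (no_A B); rewrite /= /P NBx0 By0 => /negbT; rewrite -leNgt.
Qed.

End HallStep.

Theorem fractional_hall mu nu : (forall x, 0 <= mu x) -> (forall y, 0 <= nu y) ->
  hall_cond mu nu -> feasible mu nu.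
Proof.
have [n] := ubnP (#|supp mu| + #|supp nu|); elim: n mu nu => // n IHn mu nu.
move=> size_lt mu_ge0 nu_ge0 H; apply: hall_step => //.
move=> mu' nu' mu'_ge0 nu'_ge0 H' sub_mu sub_nu neq.
by apply: IHn => //; apply: leq_trans (card_supp2_lt sub_mu sub_nu neq) _; rewrite -ltnS.
Qed.

End FractionalHall.

Lemma sum_unit_sumType (R : realDomainType) (J : finType) (F : unit + J -> R) :
  \sum_o F o = F (inl tt) + \sum_j F (inr j).
Proof. by rewrite big_sumType (big_pred1 tt) // => -[]. Qed.

Theorem fractional_hall_deficiency (R : realDomainType) (X Y : finType)
    (E : X -> Y -> bool) (mu : X -> R) (nu : Y -> R) (d : R) :
  (forall x, 0 <= mu x) -> (forall y, 0 <= nu y) -> (forall A, - d <= slack E mu nu A) ->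
  exists g : X -> Y -> R,
    [/\ forall x y, 0 <= g x y, forall x y, ~~ E x y -> g x y = 0,
        forall x, \sum_y g x y <= mu x, forall y, \sum_x g x y <= nu y &
        \sum_x mu x - d <= \sum_x \sum_y g x y].
Proof.
move=> mu_ge0 nu_ge0 H.
have d_ge0 : 0 <= d by have := H finset.set0; rewrite /slack nbhd0 !big_set0 subr0; lra.
(* a dummy vertex [inl tt] of capacity [d], adjacent to every [x] *)
pose E' x (o : unit + Y) := if o is inr y then E x y else true.
pose nu' (o : unit + Y) := if o is inr y then nu y else d.
have nu'_ge0 : forall o, 0 <= nu' o by case.
have H' : hall_cond E' mu nu'.
  move=> A; have [-> | [x0 Ax0]] := set_0Vmem A.
    by rewrite /slack big_set0 subr0 sumr_ge0.
  have nbhd_inr y : (inr y \in nbhd E' A) = (y \in nbhd E A) by rewrite !inE.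
  rewrite /slack big_mkcond sum_unit_sumType /= ifT; last first.
    by rewrite inE; apply/existsP; exists x0; rewrite Ax0.
  under eq_bigr do rewrite nbhd_inr; rewrite -big_mkcond.
  by have := H A; rewrite /slack; lra.
have [g [g_ge0 gE gr gc]] := fractional_hall mu_ge0 nu'_ge0 H'.
exists (fun x y => g x (inr y)); split.
- by move=> x y; apply: g_ge0.
- by move=> x y; apply: (gE x (inr y)).
- by move=> x; rewrite -gr sum_unit_sumType lerDr.
- by move=> y; apply: gc (inr y).
- have <- : \sum_x (mu x - g x (inl tt)) = \sum_x \sum_y g x (inr y).
    by apply: eq_bigr => x _; rewrite -gr sum_unit_sumType; lra.
  by rewrite sumrB lerB // gc.
Qed.

Local Open Scope classical_set_scope.

Section FiniteMass.
Variables (R : realType) (T : choiceType).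
Implicit Types (f : T -> R) (A B : set T).

Lemma msr_seq f (r : seq T) A : uniq r -> (forall x, f x != 0 -> x \in r) ->
  msr f A = \sum_(x <- r | x \in A) f x.
Proof.
move=> r_uniq fr; rewrite /msr (bigfs _ r_uniq) ?set_mem_set // => x _ xr.
by apply/eqP; apply: contraNT xr => /fr.
Qed.

Lemma msr_fset f (S : {fset T}) A : (forall x, f x != 0 -> x \in S) ->
  msr f A = \sum_(x : S | val x \in A) f (val x).
Proof. by move=> fS; rewrite (msr_seq _ (fset_uniq S) fS) big_seq_fsetE. Qed.

Lemma msr_fsetT f (S : {fset T}) : (forall x, f x != 0 -> x \in S) ->
  msr f setT = \sum_(x : S) f (val x).
Proof. by move=> fS; rewrite (msr_fset _ fS); apply: eq_bigl => x; rewrite in_setT. Qed.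

Lemma fin_supp_fset f : fin_supp f -> exists S : {fset T}, forall x, f x != 0 -> x \in S.
Proof.
move=> f_fin; exists (fset_set [set x | f x != 0]) => x fx.
by rewrite in_fset_set // mem_set.
Qed.

Lemma msr_ge0 f A : (forall x, 0 <= f x) -> 0 <= msr f A.
Proof. by move=> f_ge0; apply: fsumr_ge0. Qed.

Lemma msr_le f A B : fin_supp f -> (forall x, 0 <= f x) ->
  (forall x, f x != 0 -> A x -> B x) -> msr f A <= msr f B.
Proof.
move=> /fin_supp_fset[S fS] f_ge0 AB; rewrite !(msr_fset _ fS) [leRHS]big_mkcond.
rewrite [leLHS]big_mkcond; apply: ler_sum => x _.
have [fx0 | fx] := eqVneq (f (val x)) 0; first by rewrite fx0; case: ifP; case: ifP.
case: ifPn => [Ax | _]; last by case: ifP.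
by rewrite ifT // in_setE; apply: AB fx _; rewrite -in_setE.
Qed.

Lemma msr_setC f A : fin_supp f -> msr f setT = msr f A + msr f (~` A).
Proof.
move=> /fin_supp_fset[S fS]; rewrite !(msr_fset _ fS) (bigID (fun x => val x \in A)) /=.
by congr (_ + _); apply: eq_bigl => x; rewrite ?in_setC in_setT.
Qed.

Lemma msr_le1 f A : is_discrete_prob f -> msr f A <= 1.
Proof. by case=> f_ge0 f_fin <-; apply: msr_le. Qed.

Lemma msrZ f (k : R) A : msr (fun x => k * f x) A = k * msr f A.
Proof. by rewrite /msr mulr_fsumr. Qed.

End FiniteMass.

Section PartialPlans.
Variables (R : realType) (T : choiceType) (mu nu : T -> R).
Implicit Types (g : T * T -> R).

Lemma partial_plan_scale t g k : 0 <= k <= 1 -> partial_plan mu nu t g ->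
  partial_plan mu nu (k * t) (fun p => k * g p).
Proof.
move=> /andP[k_ge0 k_le1] [g_ge0 g_fin g_mass g_mu g_nu]; split.
- by move=> p; rewrite mulr_ge0.
- by apply: sub_finite_set g_fin => p /= /eqP kg; apply/eqP => g0; apply: kg; rewrite g0 mulr0.
- by rewrite msrZ g_mass.
- by move=> A; rewrite msrZ (le_trans _ (g_mu A)) // ler_piMl // msr_ge0.
- by move=> A; rewrite msrZ (le_trans _ (g_nu A)) // ler_piMl // msr_ge0.
Qed.

Lemma partial_plan_mass t g alpha : partial_plan mu nu t g -> 0 <= alpha <= t ->
  exists2 g', partial_plan mu nu alpha g' & forall p, g' p != 0 -> g p != 0.
Proof.
move=> g_plan /andP[alpha_ge0 alpha_le]; set k := alpha / t.
have [k_t k01] : k * t = alpha /\ 0 <= k <= 1.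
  have [t0 | t_neq0] := eqVneq t 0.
    move: alpha_le; rewrite /k t0 invr0 !mulr0 lexx ler01 => alpha_le0.
    by split => //; apply/eqP; rewrite eq_le alpha_le0 alpha_ge0.
  have t_gt0 : 0 < t by rewrite lt_def t_neq0 (le_trans alpha_ge0).
  by rewrite /k divfK // divr_ge0 ?(ltW t_gt0) // ler_pdivrMr // mul1r.
exists (fun p => k * g p); first by rewrite -k_t; apply: partial_plan_scale.
by move=> p; apply: contraNneq => ->; rewrite mulr0.
Qed.

Lemma msr_swap g B : msr (g \o swap_pair) B = msr g (swap_pair @` B).
Proof. by rewrite /msr fsbig_image //; apply: in2W; apply: can_inj swap_pairK. Qed.

Lemma partial_plan_swap alpha g : partial_plan mu nu alpha g ->
  partial_plan nu mu alpha (g \o swap_pair).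
Proof.
have swapX (A A' : set T) : swap_pair @` (A `*` A') = A' `*` A.
  apply/seteqP; split => [_ [[a b] [Aa A'b] <-] // | [a b] [A'a Ab]].
  by exists (b, a).
move=> [g_ge0 g_fin g_mass g_mu g_nu]; split => [p | | | A | A].
- exact: g_ge0.
- apply: sub_finite_set (finite_image swap_pair g_fin) => p /= gp.
  by exists (swap_pair p); rewrite //= swap_pairK.
- by rewrite msr_swap -setXTT swapX setXTT.
- by rewrite msr_swap swapX.
- by rewrite msr_swap swapX.
Qed.

End PartialPlans.

Section LiftPairs.
Variables (R : realType) (T : choiceType) (S : {fset T}).
Implicit Types (gS : S -> S -> R).

Definition lift_pairs gS (p : T * T) : R :=
  if insub p.1 is Some x then if insub p.2 is Some y then gS x y else 0 else 0.

Lemma lift_pairsE gS x y : lift_pairs gS (val x, val y) = gS x y.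
Proof. by rewrite /lift_pairs /= !valK. Qed.

Lemma lift_pairs_supp gS p : lift_pairs gS p != 0 ->
  exists x y, p = (val x, val y) /\ gS x y != 0.
Proof.
case: p => a b; rewrite /lift_pairs /=.
case: insubP => [x _ <- | _]; last by rewrite eqxx.
case: insubP => [y _ <- | _]; last by rewrite eqxx.
by exists x, y.
Qed.

Lemma msr_lift_pairs gS B :
  msr (lift_pairs gS) B = \sum_x \sum_(y | (val x, val y) \in B) gS x y.
Proof.
have r_uniq : uniq [seq (a, b) | a <- S, b <- S].
  by apply: allpairs_uniq => // -[? ?] [? ?].
rewrite (msr_seq _ r_uniq) => [|p /lift_pairs_supp[x [y [-> _]]]]; last first.
  by apply: allpairs_f; apply: valP.
rewrite big_mkcond big_allpairs big_seq_fsetE; apply: eq_bigr => x _.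
by rewrite big_seq_fsetE [RHS]big_mkcond; apply: eq_bigr => y _; rewrite lift_pairsE.
Qed.

Lemma partial_plan_lift_pairs (mu nu : T -> R) gS :
  (forall x, mu x != 0 -> x \in S) -> (forall x, nu x != 0 -> x \in S) ->
  (forall x y, 0 <= gS x y) ->
  (forall x, \sum_y gS x y <= mu (val x)) -> (forall y, \sum_x gS x y <= nu (val y)) ->
  partial_plan mu nu (\sum_x \sum_y gS x y) (lift_pairs gS).
Proof.
move=> muS nuS gS_ge0 gS_mu gS_nu; split.
- move=> [a b]; rewrite /lift_pairs /=.
  by case: insub => [x|] //; case: insub => [y|] //.
- have := finite_image (fun q : S * S => (val q.1, val q.2)) (@finite_finset _ setT).
  apply: sub_finite_set => p /lift_pairs_supp[x [y [-> _]]]; by exists (x, y).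
- by rewrite msr_lift_pairs; apply: eq_bigr => x _; apply: eq_bigl => y; rewrite in_setT.
- move=> A; rewrite msr_lift_pairs (msr_fset _ muS) [leRHS]big_mkcond /=.
  apply: ler_sum => x _; under eq_bigl do rewrite in_setX /= in_setT andbT.
  by case: ifP => Ax; [apply: gS_mu | rewrite big_pred0].
- move=> A; rewrite msr_lift_pairs (msr_fset _ nuS).
  under eq_bigr do under eq_bigl do rewrite in_setX /= in_setT.
  rewrite exchange_big [leLHS]big_mkcond [leRHS]big_mkcond /=; apply: ler_sum => y _.
  by case: ifP => // _; apply: gS_nu.
Qed.

End LiftPairs.

Section DiscreteProbabilities.
Variables (R : realType) (T : choiceType) (mu nu : T -> R).
Hypotheses (mu_prob : is_discrete_prob mu) (nu_prob : is_discrete_prob nu).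

Lemma fin_supp_fset2 : exists S : {fset T},
  (forall x, mu x != 0 -> x \in S) /\ (forall x, nu x != 0 -> x \in S).
Proof.
case: mu_prob nu_prob => _ mu_fin _ [_ nu_fin _].
exists (fset_set ([set x | mu x != 0] `|` [set x | nu x != 0])).
by split=> x x_supp; rewrite in_fset_set ?finite_setU // mem_set //; [left | right].
Qed.

Lemma partial_plan_exists alpha : 0 <= alpha <= 1 -> exists g, partial_plan mu nu alpha g.
Proof.
move=> alpha01; have [S [muS nuS]] := fin_supp_fset2.
case: mu_prob nu_prob => mu_ge0 _ mu1 [nu_ge0 _ nu1].
have mu_sum : \sum_(x : S) mu (val x) = 1 by rewrite -(msr_fsetT muS).
have nu_sum : \sum_(y : S) nu (val y) = 1 by rewrite -(msr_fsetT nuS).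
pose gS (x y : S) := mu (val x) * nu (val y).
have gS_mass : \sum_x \sum_y gS x y = 1.
  by under eq_bigr do rewrite -mulr_sumr nu_sum mulr1.
have g_plan : partial_plan mu nu 1 (lift_pairs gS).
  rewrite -gS_mass; apply: partial_plan_lift_pairs => // [x y | x | y].
  - exact: mulr_ge0.
  - by rewrite -mulr_sumr nu_sum mulr1.
  - by rewrite -mulr_suml mu_sum mul1r.
by have [g g_plan' _] := partial_plan_mass g_plan alpha01; exists g.
Qed.

End DiscreteProbabilities.

Section InftyCost.
Variables (R : realType) (T : choiceType) (c : T -> T -> R).
Hypotheses (c_ge0 : forall x y, 0 <= c x y) (c_le1 : forall x y, c x y <= 1).
Implicit Types (g : T * T -> R) (mu nu : T -> R).

Lemma w_infty_le g b : 0 <= b -> (forall p, g p != 0 -> c p.1 p.2 <= b) ->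
  w_infty c g <= b.
Proof.
move=> b_ge0 g_le; rewrite /w_infty; set C := [set c p.1 p.2 | p in _].
have [-> | /set0P C_ne] := eqVneq C set0; first by rewrite sup0.
by apply: ge_sup => // _ [q gq <-]; apply: g_le.
Qed.

Lemma le_w_infty g p : g p != 0 -> c p.1 p.2 <= w_infty c g.
Proof.
by move=> gp; apply: ub_le_sup; [exists 1 => _ [q _ <-]; apply: c_le1 | exists p].
Qed.

Lemma w_infty_ge0 g : 0 <= w_infty c g.
Proof.
rewrite /w_infty; set C := [set c p.1 p.2 | p in _].
have [-> | /set0P[_ [p gp _]]] := eqVneq C set0; first by rewrite sup0.
exact: le_trans (c_ge0 p.1 p.2) (le_w_infty gp).
Qed.

Lemma W_infty_le_w alpha mu nu g : partial_plan mu nu alpha g ->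
  W_infty c alpha mu nu <= w_infty c g.
Proof.
by move=> g_plan; apply: ge_inf; [exists 0 => _ [h _ <-]; apply: w_infty_ge0 | exists g].
Qed.

Lemma W_infty_ltP alpha mu nu e : (exists g, partial_plan mu nu alpha g) ->
  W_infty c alpha mu nu < e -> exists2 g, partial_plan mu nu alpha g & w_infty c g < e.
Proof.
move=> [g0 g0_plan] /inf_lt[|_ [g g_plan <-] w_lt]; last by exists g.
by exists (w_infty c g0), g0.
Qed.

End InftyCost.

Lemma msr_le_nbhd_eps_of_plan (R : realType) (T : choiceType) (c : T -> T -> R)
    (mu nu : T -> R) e e' g :
  (forall x y, c x y = c y x) -> is_discrete_prob mu -> partial_plan mu nu (1 - e) g ->
  (forall p, g p != 0 -> c p.1 p.2 < e') ->
  forall A, msr mu A <= msr nu (nbhd_eps c A e') + e.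
Proof.
move=> c_sym [_ mu_fin mu1] [g_ge0 g_fin g_mass g_mu g_nu] g_supp A.
have g_out : msr g (~` (A `*` setT)) <= msr mu (~` A).
  apply: le_trans (g_mu (~` A)); apply: msr_le => // -[a b] _ /= gAT.
  by split => // Aa; apply: gAT.
have g_in : msr g (A `*` setT) <= msr nu (nbhd_eps c A e').
  apply: le_trans (g_nu _); apply: msr_le => // -[a b] gab [Aa _]; split => //.
  by exists a; rewrite // c_sym; apply: g_supp gab.
have := msr_setC A mu_fin; have := msr_setC (A `*` setT) g_fin.
by rewrite mu1 g_mass; lra.
Qed.

Section RPWvsLP.
Variables (R : realType) (T : choiceType) (c : T -> T -> R) (mu nu : T -> R).
Hypotheses (c_ge0 : forall x y, 0 <= c x y) (c_sym : forall x y, c x y = c y x).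
Hypothesis c_le1 : forall x y, c x y <= 1.
Hypotheses (mu_prob : is_discrete_prob mu) (nu_prob : is_discrete_prob nu).

Definition LP_admissible e := forall A,
  msr mu A <= msr nu (nbhd_eps c A e) + e /\ msr nu A <= msr mu (nbhd_eps c A e) + e.

Definition near_pairs (S : {fset T}) e (x y : S) := c (val x) (val y) < e.
Arguments near_pairs : clear implicits.

Lemma W_infty_le1 alpha : 0 <= alpha <= 1 -> W_infty c alpha mu nu <= 1.
Proof.
move=> alpha01; have [g g_plan] := partial_plan_exists mu_prob nu_prob alpha01.
by apply: le_trans (W_infty_le_w c_ge0 c_le1 g_plan) (w_infty_le _ _) => // p _.
Qed.

Lemma RPW_infty_le e : 0 <= e <= 1 -> W_infty c (1 - e) mu nu <= e ->
  RPW_infty c 1 mu nu <= e.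
Proof.
move=> e01 We; apply: ge_inf; first by exists 0 => x [/andP[]].
by split; rewrite ?mul1r.
Qed.

Lemma LP_le e : 0 < e -> LP_admissible e -> LP c mu nu <= e.
Proof. by move=> e_gt0 LPe; apply: ge_inf; first by exists 0 => x [/ltW]. Qed.

Lemma LP_admissible_ge1 e : 1 <= e -> LP_admissible e.
Proof.
case: mu_prob nu_prob => mu_ge0 _ _ [nu_ge0 _ _] e_ge1 A.
have := msr_le1 A mu_prob; have := msr_le1 A nu_prob.
have := msr_ge0 (nbhd_eps c A e) mu_ge0; have := msr_ge0 (nbhd_eps c A e) nu_ge0.
lra.
Qed.

Lemma slack_near_pairs (S : {fset T}) e (A : {set S}) :
  (forall x, mu x != 0 -> x \in S) -> (forall x, nu x != 0 -> x \in S) ->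
  slack (near_pairs S e) (mu \o val) (nu \o val) A =
  msr nu (nbhd_eps c (val @` [set` A]) e) - msr mu (val @` [set` A]).
Proof.
move=> muS nuS; rewrite (msr_fset _ muS) (msr_fset _ nuS) /slack.
congr (_ - _); apply: eq_bigl => x; apply/idP/idP; rewrite in_setE.
- rewrite inE => /existsP[y /andP[Ay Eyx]]; exists (val y); first by exists y.
  by rewrite c_sym.
- case=> _ [y /= Ay <-] cxy; rewrite inE; apply/existsP; exists y.
  by rewrite Ay /near_pairs c_sym.
- by move=> Ax; exists x.
- by case=> y /= Ay /val_inj <-.
Qed.

Lemma W_infty_le_of_LP e : 0 < e <= 1 ->
  (forall A, msr mu A <= msr nu (nbhd_eps c A e) + e) -> W_infty c (1 - e) mu nu <= e.
Proof.
move=> /andP[e_gt0 e_le1] LPe; have [S [muS nuS]] := fin_supp_fset2 mu_prob nu_prob.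
case: mu_prob nu_prob => mu_ge0 _ mu1 [nu_ge0 _ _].
have slack_ge A : - e <= slack (near_pairs S e) (mu \o val) (nu \o val) A.
  by rewrite slack_near_pairs //; move: (LPe (val @` [set` A])); lra.
have [gS [gS_ge0 gSE gS_mu gS_nu gS_mass]] :=
  fractional_hall_deficiency (fun x => mu_ge0 (val x)) (fun y => nu_ge0 (val y)) slack_ge.
have mass_ok : 0 <= 1 - e <= \sum_x \sum_y gS x y.
  by rewrite subr_ge0 e_le1 /= -mu1 (msr_fsetT muS); apply: gS_mass.
have [g g_plan g_supp] :=
  partial_plan_mass (partial_plan_lift_pairs muS nuS gS_ge0 gS_mu gS_nu) mass_ok.
apply: le_trans (W_infty_le_w c_ge0 c_le1 g_plan) _.
apply: w_infty_le => [|p /g_supp/lift_pairs_supp[x [y [-> gxy]]]]; first exact: ltW.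
by apply: ltW; apply: contraNT gxy => /gSE ->; rewrite eqxx.
Qed.

Lemma LP_admissible_of_W_infty e e' : 0 <= e <= 1 -> W_infty c (1 - e) mu nu <= e ->
  e < e' -> LP_admissible e'.
Proof.
move=> e01 We e_lt A; have alpha01 : 0 <= 1 - e <= 1 by move: e01 => /andP[]; lra.
have [g g_plan g_w] := W_infty_ltP
  (partial_plan_exists mu_prob nu_prob alpha01) (le_lt_trans We e_lt).
have g_supp p : g p != 0 -> c p.1 p.2 < e' := fun gp => le_lt_trans (le_w_infty c_le1 gp) g_w.
have g'_supp p : (g \o swap_pair) p != 0 -> c p.1 p.2 < e'.
  by rewrite c_sym; apply: g_supp.
have := msr_le_nbhd_eps_of_plan c_sym mu_prob g_plan g_supp A.
have := msr_le_nbhd_eps_of_plan c_sym nu_prob (partial_plan_swap g_plan) g'_supp A.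
lra.
Qed.

End RPWvsLP.

Unset Implicit Arguments.

Theorem lemmaA3 (R : realType) (T : choiceType) (c : T -> T -> R)
  (mu nu : T -> R) :
  is_metric c -> (forall x y, c x y <= 1) ->
  is_discrete_prob mu -> is_discrete_prob nu ->
  RPW_infty c 1 mu nu = LP c mu nu.
Proof.
move=> [c_ge0 _ c_sym _] c_le1 mu_prob nu_prob.
apply/eqP; rewrite eq_le; apply/andP; split.
- apply: lb_le_inf => [|e [e_gt0 LPe]].
    by exists 2; split => //; apply: LP_admissible_ge1 => //; rewrite ler1n.
  have [e_ge1 | e_lt1] := leP 1 e.
    apply: le_trans e_ge1; apply: RPW_infty_le => //; first by rewrite ler01 lexx.
    by rewrite subrr; apply: W_infty_le1; rewrite // lexx ler01.
  apply: RPW_infty_le => //; first by rewrite (ltW e_gt0) (ltW e_lt1).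
  by apply: W_infty_le_of_LP => //; [rewrite e_gt0 ltW | move=> A; case: (LPe A)].
- apply: lb_le_inf => [|e [e01 We]].
    exists 1; split; first by rewrite ler01 lexx.
    by rewrite subrr mul1r; apply: W_infty_le1; rewrite // lexx ler01.
  apply/ler_addgt0Pr => d d_gt0; apply: LP_le => //; first by case/andP: e01 => e_ge0 _; lra.
  apply: (LP_admissible_of_W_infty c_sym c_le1 mu_prob nu_prob e01); last by rewrite ltrDl.
  by rewrite mul1r in We.
Qed.
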